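(* Let $K$ be an algebraically closed field, let $V$ be a finite-dimensional vector space over $K$ with $\dim V\geq 4$, and let $\omega$ be an alternating trilinear form on $V$. Then every two-dimensional subspace of $V$ contains a nonzero vector lying in some two-dimensional $\omega$-singular subspace of $V$.
   Context: A two-dimensional subspace $L\subseteq V$ is $\omega$-singular if $\omega(a,b,v)=0$ for all $a,b\in L$, $v\in V$. *)

From HB Require Import structures.
From mathcomp Require Import all_boot all_order all_algebra.
Set Implicit Arguments. Unset Strict Implicit. Unset Printing Implicit Defensive.
Import GRing.Theory.
Local Open Scope ring_scope.

Definition trilinear (K : fieldType) (V : vectType K) (w : V -> V -> V -> K) :=
  [/\ forall (a : K) (x y b c : V), w (a *: x + y) b c = a * w x b c + w y b c,
      forall (a : K) (x y b c : V), w b (a *: x + y) c = a * w b x c + w b y c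
    & forall (a : K) (x y b c : V), w b c (a *: x + y) = a * w b c x + w b c y].

Definition alternating (K : fieldType) (V : vectType K) (w : V -> V -> V -> K) :=
  [/\ forall x y : V, w x x y = 0,
      forall x y : V, w x y y = 0
    & forall x y : V, w x y x = 0].

Definition singular (K : fieldType) (V : vectType K) (w : V -> V -> V -> K)
  (L : {vspace V}) :=
  forall a b v : V, a \in L -> b \in L -> w a b v = 0.

From HB Require Import structures.
From mathcomp Require Import all_boot all_order all_algebra.
Set Implicit Arguments. Unset Strict Implicit. Unset Printing Implicit Defensive.
Import GRing.Theory.
Local Open Scope ring_scope.

(* For x in V, the alternating bilinear form (a, b) |-> w x a b
   has x in its radical.  If x :: e is a basis of V and the Gram matrix
   (w x e_i e_j) is singular, a nonzero kernel vector gives y in <<e>> with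
   w x y _ = 0, so L = <<x, y>> is a two-dimensional singular subspace.

   Let p, q be a basis of P and u a basis of a complement of P, so that
   k := size u = dim V - 2 >= 2.  The determinant f(s) of the Gram matrix of
   s p + q on p :: u is a polynomial in s.  Over an algebraically closed field
   either f has a root s (and x = s p + q works), or f is a nonzero constant c.
   In the latter case a homogeneity computation shows that the determinant
   g(t) of the Gram matrix of t q + p on q :: u satisfies
   t^2 g(t) = c t^(k+1), whence g = c X^(k-1) and g(0) = 0: then x = p works. *)

Definition linear_in (K : fieldType) (V : vectType K) (phi : V -> K) :=
  forall (a : K) (x y : V), phi (a *: x + y) = a * phi x + phi y.

Section LinearFunctional.

Variables (K : fieldType) (V : vectType K) (phi : V -> K).
Hypothesis phi_lin : linear_in phi.

Lemma linear_in0 : phi 0 = 0.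
Proof.
have h := phi_lin 1 0 0; rewrite scaler0 add0r mul1r in h.
by apply: (addIr (phi 0)); rewrite add0r -h.
Qed.

Lemma linear_inD x y : phi (x + y) = phi x + phi y.
Proof. by rewrite -{1}[x]scale1r phi_lin mul1r. Qed.

Lemma linear_inZ a x : phi (a *: x) = a * phi x.
Proof. by rewrite -[a *: x]addr0 phi_lin linear_in0 addr0. Qed.

Lemma linear_in_sum n (c : 'I_n -> K) (f : 'I_n -> V) :
  phi (\sum_i c i *: f i) = \sum_i c i * phi (f i).
Proof.
rewrite (big_morph phi linear_inD linear_in0).
by apply: eq_bigr => i _; apply: linear_inZ.
Qed.

Lemma linear_in_span0 (X : seq V) :
  {in X, forall v, phi v = 0} -> {in <<X>>%VS, forall v, phi v = 0}.
Proof.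
move=> X0 v /(coord_span (X := in_tuple X)) ->.
by rewrite linear_in_sum big1 // => i _; rewrite X0 ?mulr0 ?mem_nth.
Qed.

End LinearFunctional.

Section AlternatingTrilinear.

Variables (K : fieldType) (V : vectType K) (w : V -> V -> V -> K).
Hypotheses (w_tri : trilinear w) (w_alt : alternating w).

Lemma linear_slot1 b c : linear_in (fun x => w x b c).
Proof. by case: w_tri => w1 _ _ a x y; apply: w1. Qed.

Lemma linear_slot2 a c : linear_in (fun x => w a x c).
Proof. by case: w_tri => _ w2 _ b x y; apply: w2. Qed.

Lemma linear_slot3 a b : linear_in (w a b).
Proof. by case: w_tri => _ _ w3 c x y; apply: w3. Qed.

Lemma w_swap12 a b c : w b a c = - w a b c.
Proof.
have [w_aac _ _] := w_alt; have := w_aac (a + b) c.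
rewrite (linear_inD (linear_slot1 (a + b) c)).
rewrite (linear_inD (linear_slot2 a c)) (linear_inD (linear_slot2 b c)).
rewrite !w_aac add0r addr0.
by move/eqP; rewrite addr_eq0 => /eqP ->; rewrite opprK.
Qed.

Lemma w_swap23 a b c : w a c b = - w a b c.
Proof.
have [_ w_abb _] := w_alt; have := w_abb a (b + c).
rewrite (linear_inD (linear_slot2 a (b + c))).
rewrite (linear_inD (linear_slot3 a b)) (linear_inD (linear_slot3 a c)).
rewrite !w_abb add0r addr0.
by move/eqP; rewrite addr_eq0 => /eqP ->; rewrite opprK.
Qed.

Lemma radical_pair_singular x y :
  free [:: x; y] -> (forall v, w x y v = 0) ->
  exists L : {vspace V}, [/\ \dim L = 2%N, x \in L & singular w L].
Proof.
move=> xy_free wxy0; exists <<[:: x; y]>>%VS; split.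
- exact/eqnP.
- by rewrite memv_span ?mem_head.
move=> a b v aL bL.
have [w_aac w_abb _] := w_alt.
have pair0 c d : c \in [:: x; y] -> d \in [:: x; y] -> w c d v = 0.
  rewrite !inE => /orP[]/eqP-> /orP[]/eqP->; rewrite ?w_aac ?wxy0 //.
  by rewrite w_swap12 wxy0 oppr0.
have a_d0 d : d \in [:: x; y] -> w a d v = 0.
  move=> dX; apply: (linear_in_span0 (linear_slot1 d v)) aL => c cX.
  exact: pair0.
exact: (linear_in_span0 (linear_slot2 a v)) bL.
Qed.

Definition gram (x : V) (e : seq V) : 'M[K]_(size e) :=
  \matrix_(i, j) w x e`_i e`_j.

Lemma degenerate_gram_radical x e :
  basis_of fullv (x :: e) -> \det (gram x e) = 0 ->
  exists2 y, free [:: x; y] & forall v, w x y v = 0.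
Proof.
move=> xe_basis /eqP/det0P [r r_neq0 rG0].
have := basis_free xe_basis; rewrite free_cons => /andP [x_notin_e e_free].
pose y := \sum_i r 0 i *: e`_i.
have wxye (j : 'I_(size e)) : w x y e`_j = 0.
  move/matrixP: rG0 => /(_ 0 j); rewrite !mxE => <-.
  rewrite (linear_in_sum (linear_slot2 x e`_j)).
  by apply: eq_bigr => i _; rewrite mxE.
have y_neq0 : y != 0.
  apply: contraNneq r_neq0 => y0; apply/eqP/rowP => i; rewrite mxE.
  have /freeP e_freeP : free (in_tuple e) := e_free.
  exact: e_freeP y0 i.
have y_in_e : y \in <<e>>%VS.
  by apply: rpred_sum => i _; rewrite rpredZ ?memv_span ?mem_nth.
exists y.
  rewrite free_cons seq1_free y_neq0 andbT; apply: contra x_notin_e.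
  by apply: subvP; apply/span_subvP => z; rewrite inE => /eqP ->.
move=> v; have : v \in <<x :: e>>%VS by rewrite (span_basis xe_basis) memvf.
apply: (linear_in_span0 (linear_slot3 x y)) => z.
rewrite inE => /orP [/eqP -> | ]; first by case: w_alt.
by case/(nthP 0) => j je <-; apply: (wxye (Ordinal je)).
Qed.

Lemma degenerate_gram_singular x e :
  basis_of fullv (x :: e) -> \det (gram x e) = 0 ->
  x != 0 /\ exists L : {vspace V}, [/\ \dim L = 2%N, x \in L & singular w L].
Proof.
move=> xe_basis det0; split; first by rewrite (basis_not0 xe_basis) ?mem_head.
have [y xy_free wxy0] := degenerate_gram_radical xe_basis det0.
exact: radical_pair_singular xy_free wxy0.
Qed.

Lemma det_gram_scale c x e :
  \det (gram (c *: x) e) = c ^+ size e * \det (gram x e).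
Proof.
rewrite -detZ; congr (\det _); apply/matrixP => i j.
by rewrite !mxE (linear_inZ (linear_slot1 _ _)).
Qed.

Lemma det_gram_cons_shift x a b d u :
  (forall v, w x a v = d * w x b v) ->
  \det (gram x (a :: u)) = d ^+ 2 * \det (gram x (b :: u)).
Proof.
move=> wa; have [_ w_abb _] := w_alt.
pose D : 'M[K]_((size u).+1) := diag_mx (\row_i (if i == ord0 then d else 1)).
have -> : gram x (a :: u) = D *m gram x (b :: u) *m D.
  apply/matrixP => i j; rewrite mul_mx_diag mul_diag_mx !mxE.
  case: i => [[|i] ?]; case: j => [[|j] ?] /=;
    rewrite ?w_abb ?mulr0 ?mul0r ?mulr1 ?mul1r ?wa //.
  by rewrite w_swap23 wa w_swap23 mulrN opprK mulrC.
rewrite (det_mulmx (D *m gram x (b :: u)) D) det_mulmx.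
have -> : \det D = d.
  by rewrite det_diag big_ord_recl big1 => [|i _]; rewrite mxE ?eqxx ?mulr1.
by rewrite mulrC mulrA expr2.
Qed.

Lemma det_gram_swap s p q u : s != 0 ->
  s ^+ 2 * \det (gram (s *: p + q) (p :: u)) =
  s ^+ (size u).+1 * \det (gram (s^-1 *: q + p) (q :: u)).
Proof.
move=> s_neq0; set x' := s^-1 *: q + p.
have -> : s *: p + q = s *: x'.
  by rewrite /x' scalerDr scalerA mulfV // scale1r addrC.
have wp v : w x' p v = - s^-1 * w x' q v.
  have [w_aac _ _] := w_alt; have := w_aac x' v.
  rewrite {2}/x' (linear_slot2 x' v) => /eqP; rewrite addrC addr_eq0 => /eqP ->.
  by rewrite mulNr.
rewrite det_gram_scale (det_gram_cons_shift u wp) /= sqrrN exprVn.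
by rewrite mulrCA mulVKf // expf_neq0.
Qed.

Lemma det_gram_pencil p q e :
  exists f : {poly K}, forall s, f.[s] = \det (gram (s *: p + q) e).
Proof.
pose P := map_mx polyC (gram q e) + 'X *: map_mx polyC (gram p e).
exists (\det P) => s; rewrite -horner_evalE -det_map_mx; congr (\det _).
apply/matrixP => i j.
by rewrite !mxE /= horner_evalE !hornerE (linear_slot1 _ _) addrC.
Qed.

End AlternatingTrilinear.

(* Over an algebraically closed (hence infinite) field, polynomials are
   determined by their values. *)
Lemma closed_poly_eq (K : closedFieldType) (g h : {poly K}) :
  (forall t, g.[t] = h.[t]) -> g = h.
Proof.
move=> gh; apply/eqP; rewrite -subr_eq0; apply/negPn/negP.
by case/closed_nonrootP => t; rewrite /root hornerD hornerN gh subrr eqxx.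
Qed.

Lemma basis_extend (K : fieldType) (V : vectType K) (P : {vspace V}) X :
  basis_of P X -> basis_of fullv (X ++ vbasis P^C).
Proof.
move=> XP; rewrite -(addv_complf P).
exact: cat_basis (introT directv_addP (capv_compl P)) XP (vbasisP _).
Qed.

Lemma basis_cons_shift (K : fieldType) (V : vectType K) (U : {vspace V})
    (s : K) p q u :
  basis_of U (p :: q :: u) -> basis_of U ((s *: p + q) :: p :: u).
Proof.
rewrite !basisEdim /= => /andP [U_sub ->]; rewrite andbT.
set Y := (s *: p + q) :: p :: u.
have pY : p \in <<Y>>%VS by rewrite memv_span // inE mem_head orbT.
have spqY : s *: p + q \in <<Y>>%VS by rewrite memv_span ?mem_head.
apply: subv_trans U_sub _; apply/span_subvP => v.
rewrite !inE => /or3P [/eqP -> // | /eqP -> | vu].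
- by rewrite -[q](addKr (s *: p)) rpredD ?rpredN ?rpredZ.
- by rewrite memv_span // !inE vu !orbT.
Qed.

Unset Implicit Arguments.

Theorem mainTheorem6 (K : closedFieldType) (V : vectType K)
  (w : V -> V -> V -> K) :
  (4 <= \dim (fullv : {vspace V}))%N ->
  trilinear w -> alternating w ->
  forall P : {vspace V}, \dim P = 2%N ->
  exists2 x : V, (x \in P) && (x != 0) &
    exists L : {vspace V}, [/\ \dim L = 2%N, x \in L & singular w L].
Proof.
move=> dimV w_tri w_alt P dimP.
have [p [q pq_basis]] : exists p q, basis_of P [:: p; q].
  have := vbasisP P; move: (tval (vbasis P)) (size_tuple (vbasis P)).
  by rewrite dimP => -[|p [|q [|]]] //= _ pq; exists p, q.
set u : seq V := vbasis P^C.
have V_basis : basis_of fullv (p :: q :: u) := basis_extend pq_basis.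
have size_u : (2 <= size u)%N by rewrite size_tuple dimv_compl dimP ltn_subRL.
have pP : p \in P by rewrite (basis_mem pq_basis) ?mem_head.
have qP : q \in P by rewrite (basis_mem pq_basis) // !inE eqxx orbT.
have conclude x e : x \in P -> basis_of fullv (x :: e) ->
    \det (gram w x e) = 0 -> exists2 x : V, (x \in P) && (x != 0) &
    exists L : {vspace V}, [/\ \dim L = 2%N, x \in L & singular w L].
  move=> xP xe_basis det0.
  have [x_neq0 L_ex] := degenerate_gram_singular w_tri w_alt xe_basis det0.
  by exists x; rewrite ?xP.
have [f f_det] := det_gram_pencil w_tri p q (p :: u).
have [g g_det] := det_gram_pencil w_tri q p (q :: u).
have [/closed_rootP [s /rootP f_s] | /negPn /size_poly1P [c _ f_c]] :=
  boolP (size f != 1%N).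
  apply: (conclude (s *: p + q) (p :: u)); last by rewrite -f_det.
    by rewrite rpredD ?rpredZ.
  exact: basis_cons_shift.
(* f is the nonzero constant c: by homogeneity t^2 g(t) = c t^(k+1). *)
have gX2 : g * 'X^2 = c *: 'X^((size u).+1).
  apply: closed_poly_eq => t; rewrite hornerM hornerZ !hornerXn.
  have [-> | t_neq0] := eqVneq t 0; first by rewrite !expr0n !mulr0.
  rewrite mulrC g_det (det_gram_swap w_tri w_alt q p u t_neq0) -f_det f_c.
  by rewrite hornerC mulrC.
have g_eq : g = c *: 'X^((size u).-1).
  have X2_neq0 : 'X^2 != 0 :> {poly K} by rewrite expf_neq0 ?polyX_eq0.
  apply: (mulIf X2_neq0); rewrite gX2 -scalerAl -exprD.
  by rewrite addn2 prednK // ltnW.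
have g0 : g.[0] = 0.
  by rewrite g_eq hornerZ hornerXn expr0n -subn1 subn_eq0 leqNgt size_u mulr0.
apply: (conclude p (q :: u) pP V_basis).
by rewrite -[p]add0r -(scale0r q) -g_det g0.
Qed.
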